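(* Let $n,b$ be integers with $1<n<b$, let $C$ be an $(n,b)$-permutiple class with graph $G_C$, and suppose that the state $n-1$ is a vertex of $\Gamma_C$. Then the symmetric closure $\widehat{C}$ of $C$ is a symmetric class. Moreover, the following are equivalent: (1) $C$ is a symmetric class; (2) $C=\widehat{C}$; (3) $\Gamma_C$ is a symmetric subgraph of the $(n,b)$-Hoey-Sloane graph (i.e. $\overline{\Gamma}_C=\Gamma_C$); (4) $G_C$ is a symmetric graph (i.e. $\overline{G}_C=G_C$).
   Context: For digits $0\le d_j<b$, $(d_k,\ldots,d_0)_b=\sum_j d_jb^j$ (leading zeros allowed). For a permutation $\sigma$ of $\{0,\ldots,k\}$, $(d_k,\ldots,d_0)_b$ is an $(n,b,\sigma)$-permutiple if $(d_k,\ldots,d_0)_b=n\cdot(d_{\sigma(k)},\ldots,d_{\sigma(0)})_b$; an $(n,b)$-permutiple if this holds for some $\sigma$. Its graph $G_p$ is the directed graph on vertex set $\{0,\ldots,b-1\}$ with edge set $\{(d_j,d_{\sigma(j)})\mid 0\le j\le k\}$. For a directed graph $G$ on $\{0,\ldots,b-1\}$ let $\mathrm{Cl}(G)$ be the set of all $(n,b)$-permutiples $q$ with $G_q$ a subgraph of $G$. The class of a permutiple $p$ is $C=\mathrm{Cl}(G_p)$, with graph $G_C=G_p$. For a digit $d$ put $\overline d=b-1-d$, for a state $c\in\{0,\dots,n-1\}$ put $\overline c=n-1-c$. The reflection $\overline G$ of a graph $G$ on $\{0,\ldots,b-1\}$ has edges $(\overline d_1,\overline d_2)$ for edges $(d_1,d_2)$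 of $G$. With $\lambda(x)$ the least non-negative residue mod $b$, the mother graph $M$ has vertex set $\{0,\ldots,b-1\}$ and edges the pairs $(d_1,d_2)$ with $\lambda(d_1+(b-n)d_2)\le n-1$. The Hoey-Sloane graph $\Gamma$ is the edge-labelled directed graph on states $\{0,\ldots,n-1\}$ where $(c_1,c_2)$ is an edge labelled by every edge $(d_1,d_2)$ of $M$ with $nd_2-d_1+c_1=bc_2$ (an edge exists iff such a label exists). The cycle image of a directed cycle $C_0$ of $M$ is the edge-labelled subgraph of $\Gamma$ with edges the $(c_1,c_2)$ for which $\{(d_1,d_2)\in C_0\mid nd_2-d_1+c_1=bc_2\}\neq\emptyset$, labelled by this set, and vertices their endpoints. $\Gamma_C$ is the union of the cycle images of the directed cycles contained in $G_C$. The reflection of an edge-labelled subgraph of $\Gamma$ replaces each vertex $c$ by $\overline c$, each edge $(c_1,c_2)$ by $(\overline c_1,\overline c_2)$, and each label $(d_1,d_2)$ by $(\overline d_1,\overline d_2)$. When $n-1$ is a vertex of $\Gamma_C$, there is an $(n,b)$-permutiple with graph $\overline{G}_C$, and the reflection of $C$ is the class $\overline{C}=\mathrm{Cl}(\overline{G}_C)$ (with graph $\overline{G}_C$); $C$ is a symmetric class if $C=\overline{C}$. The symmetric closure of $C$ is the permutiple class $\widehat{C}$ with graph $G_C\cup\overline{G}_C$, i.e. $\widehat C=\mathrm{Cl}(G_C\cup\overline{G}_C)$; it is a symmetric class if it equals its reflection, the class with graph $\overline{G_C\cup\overline{G}_C}$. *)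

(* digits, states, graphs are naturals; graphs on the vertex
   set {0,...,b-1} are boolean relations on nat whose edges lie in [0,b)^2. *)
From mathcomp Require Import all_boot all_order.
From mathcomp Require Import perm.

Set Implicit Arguments.
Unset Strict Implicit.
Unset Printing Implicit Defensive.

(* A candidate permutiple: digits (d_k,...,d_0) together with a permutation
   sigma of {0,...,k}. *)
Record pdata := PData {
  pk : nat;
  pd : 'I_pk.+1 -> nat;
  psig : {perm 'I_pk.+1} }.
Arguments pd : clear implicits.
Arguments psig : clear implicits.

Definition digval (b k : nat) (d : 'I_k.+1 -> nat) : nat :=
  \sum_(j < k.+1) d j * b ^ j.

Definition is_permutiple (n b : nat) (q : pdata) : Prop :=
  (forall j, pd q j < b) /\
  digval b (pd q) = n * digval b (fun j => pd q (psig q j)).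

Definition Gp (q : pdata) : rel nat :=
  fun x y => [exists j : 'I_(pk q).+1, (pd q j == x) && (pd q (psig q j) == y)].

Definition subgraph (G H : rel nat) : Prop := forall x y, G x y -> H x y.

Definition unionG (G H : rel nat) : rel nat := fun x y => G x y || H x y.

Definition reflG (b : nat) (G : rel nat) : rel nat :=
  fun x y => [&& x < b, y < b & G (b - 1 - x) (b - 1 - y)].

Definition Cl (n b : nat) (G : rel nat) (q : pdata) : Prop :=
  is_permutiple n b q /\ subgraph (Gp q) G.

Definition mother (n b : nat) : rel nat :=
  fun d1 d2 => [&& d1 < b, d2 < b & (d1 + (b - n) * d2) %% b <= n - 1].

(* a directed cycle (loops allowed) in G, given by its distinct vertices
   c = [:: v_0; ...; v_{m-1}], with edges (v_i, v_{i+1 mod m}) *)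
Definition dcycle (G : rel nat) (c : seq nat) : bool :=
  [&& c != [::], uniq c & cycle G c].

Definition cedge (c : seq nat) (x y : nat) : bool := (x \in c) && (y == next c x).

(* Gamma_G: union of the cycle images of the directed cycles of M contained
   in G.  Gamma n b G c1 c2 d1 d2 holds iff (c1,c2) is an edge of Gamma_G
   carrying the label (d1,d2). *)
Definition Gamma (n b : nat) (G : rel nat) (c1 c2 d1 d2 : nat) : Prop :=
  [/\ c1 < n, c2 < n &
   exists c : seq nat,
     [/\ dcycle (mother n b) c, cycle G c, cedge c d1 d2 &
         n * d2 + c1 = b * c2 + d1]].

Definition Gamma_vertex (n b : nat) (G : rel nat) (s : nat) : Prop :=
  exists t d1 d2, Gamma n b G s t d1 d2 \/ Gamma n b G t s d1 d2.

Definition Gamma_refl (n b : nat) (G : rel nat) (c1 c2 d1 d2 : nat) : Prop :=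
  [/\ c1 < n, c2 < n, d1 < b, d2 < b &
      Gamma n b G (n - 1 - c1) (n - 1 - c2) (b - 1 - d1) (b - 1 - d2)].

Definition same_class (P Q : pdata -> Prop) : Prop := forall q, P q <-> Q q.

(* the class Cl(G) with graph G is a symmetric class: its reflection is
   defined (n-1 is a vertex of Gamma_G) and Cl(G) = Cl(reflection of G) *)
Definition symmetric_class (n b : nat) (G : rel nat) : Prop :=
  Gamma_vertex n b G (n - 1) /\ same_class (Cl n b G) (Cl n b (reflG b G)).

(* Writing p = n * p' digitwise, the pairs (d_j, d_sigma(j)) read from the least
   significant position form a closed walk of carries 0 -> ... -> 0 with steps
   n * y + c = b * c' + x, and conversely any such closed walk whose multiset of
   first digits equals that of second digits is a permutiple.  Complementing
   digits (d |-> b-1-d) and carries (c |-> n-1-c) maps carry steps to carry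
   steps.  If n-1 is a state of Gamma_C, the carry walk of p passes through n-1
   (carries are determined by the digits); splitting it there as 0 -A-> n-1 -B-> 0
   and appending the complemented pieces 0 -B'-> n-1 -A'-> 0 gives a permutiple
   with graph G_C u refl(G_C).  All four conditions then reduce to
   G_C = refl(G_C): for (3) one uses that every edge of G_C lies on a cycle of
   G_C (sigma is a permutation) and that complementation maps cycles of the
   mother graph to cycles of the mother graph. *)

From mathcomp Require Import all_boot all_order.
From mathcomp Require Import perm.
From mathcomp Require Import zify.

Set Implicit Arguments.
Unset Strict Implicit.
Unset Printing Implicit Defensive.

Lemma complK m x : x < m -> m - 1 - (m - 1 - x) = x.
Proof. lia. Qed.

Lemma digit_carry_uniq b x x' u u' : x < b -> x' < b ->
  x + b * u = x' + b * u' -> x = x' /\ u = u'.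
Proof.
move=> hx hx' e; suff eu : u = u' by subst; lia.
case: (ltngtP u u') => // h.
- have: b * u.+1 <= b * u' by rewrite leq_mul2l h orbT.
  lia.
- have: b * u'.+1 <= b * u by rewrite leq_mul2l h orbT.
  lia.
Qed.

Lemma carry_step_uniq n b x y c1 c2 c1' c2' : c1 < b -> c1' < b ->
  n * y + c1 = b * c2 + x -> n * y + c1' = b * c2' + x -> c1 = c1' /\ c2 = c2'.
Proof.
move=> h h' e e'; have [] // := @digit_carry_uniq b c1 c1' c2' c2 h h'; lia.
Qed.

Lemma carry_lt n b x y c c' : y < b -> c < n -> n * y + c = b * c' + x -> c' < n.
Proof. nia. Qed.

Lemma carry_step_compl n b x y c c' : x < b -> y < b -> c < n -> c' < n ->
  n * y + c = b * c' + x ->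
  n * (b - 1 - y) + (n - 1 - c) = b * (n - 1 - c') + (b - 1 - x).
Proof. nia. Qed.

Lemma motherP n b x y : 0 < n -> n < b ->
  mother n b x y <->
  [/\ x < b, y < b & exists c c', c < n /\ n * y + c = b * c' + x].
Proof.
move=> n0 nb; rewrite /mother; have [m ->] : exists m, b = n + m by exists (b - n); lia.
rewrite addKn; split.
- case/and3P => hx hy hm; split => //.
  have ed := divn_eq (x + m * y) (n + m).
  set q := _ %/ _ in ed; set r := _ %% _ in ed hm.
  have hq : q <= y.
    rewrite leqNgt; apply/negP => h.
    have : y.+1 * (n + m) <= q * (n + m) by rewrite leq_mul2r h orbT.
    nia.
  exists r, (y - q); split; first lia.
  rewrite mulnBr; have : q * (n + m) <= y * (n + m) by rewrite leq_mul2r hq orbT.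
  nia.
- case=> hx hy [c [c' [hc e]]]; rewrite hx hy /=.
  have hc' : c' <= y.
    rewrite leqNgt; apply/negP => h.
    have : (n + m) * y.+1 <= (n + m) * c' by rewrite leq_mul2l h orbT.
    nia.
  have -> : x + m * y = (y - c') * (n + m) + c.
    rewrite mulnBl; have : c' * (n + m) <= y * (n + m) by rewrite leq_mul2r hc' orbT.
    nia.
  by rewrite modnMDl modn_small; lia.
Qed.

Lemma mother_compl n b x y : 0 < n -> n < b ->
  mother n b x y -> mother n b (b - 1 - x) (b - 1 - y).
Proof.
move=> n0 nb /(motherP _ _ n0 nb) [hx hy [c [c' [hc e]]]].
apply/(motherP _ _ n0 nb); split; try lia.
exists (n - 1 - c), (n - 1 - c'); split; first lia.
by apply: carry_step_compl => //; apply: carry_lt e.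
Qed.

Definition seq_val (b : nat) (s : seq nat) : nat := foldr (fun x v => x + b * v) 0 s.

Definition digit_pairs (b : nat) (L : seq (nat * nat)) : bool :=
  all (fun e => (e.1 < b) && (e.2 < b)) L.

(* [carry_walk n b c L c']: multiplying the y-digits of L by n, least
   significant pair first and starting with carry c, produces the x-digits of L
   and the final carry c'. *)
Fixpoint carry_walk (n b c : nat) (L : seq (nat * nat)) (c' : nat) : Prop :=
  if L is (x, y) :: L' then exists2 c1, n * y + c = b * c1 + x & carry_walk n b c1 L' c'
  else c = c'.

Lemma digit_pairs_cat b A B :
  digit_pairs b (A ++ B) = digit_pairs b A && digit_pairs b B.
Proof. exact: all_cat. Qed.

Section CarryWalk.
Variables n b : nat.

Lemma carry_walk_cat c L1 L2 c'' :
  carry_walk n b c (L1 ++ L2) c'' <->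
  exists c', carry_walk n b c L1 c' /\ carry_walk n b c' L2 c''.
Proof.
elim: L1 c => [|[x y] L1 IH] c /=; first by split; [exists c | case=> c' [->]].
split.
- by case=> c1 e /IH [c' [w1 w2]]; exists c'; split; first exists c1.
- by case=> c' [[c1 e w1] w2]; exists c1 => //; apply/IH; exists c'.
Qed.

Lemma carry_walkP c L c' : 0 < b -> digit_pairs b L ->
  carry_walk n b c L c' <->
  seq_val b (unzip1 L) + b ^ size L * c' = c + n * seq_val b (unzip2 L).
Proof.
move=> b0; elim: L c => [|[x y] L IH] c /=; first by rewrite expn0; lia.
case/andP=> /andP[hx _] hL; rewrite expnS.
set V1 := seq_val b _; set V2 := seq_val b _.
split.
- by case=> c1 e /IH; nia.
- move=> e; have ed := divn_eq (c + n * y) b.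
  have [<- e'] : (c + n * y) %% b = x /\ (c + n * y) %/ b + n * V2 = V1 + b ^ size L * c'.
    by apply: digit_carry_uniq; [exact: ltn_pmod | done | nia].
  by exists ((c + n * y) %/ b); [lia | apply/IH; lia].
Qed.

Lemma carry_walk_lt c L c' : carry_walk n b c L c' -> digit_pairs b L -> c < n -> c' < n.
Proof.
elim: L c => [|[x y] L IH] c /=; first by move=> ->.
by case=> c1 e w /andP[/andP[_ hy] hL] hc; apply: IH w hL (carry_lt hy hc e).
Qed.

Definition compl_pair (e : nat * nat) : nat * nat := (b - 1 - e.1, b - 1 - e.2).

Lemma carry_walk_compl c L c' : carry_walk n b c L c' -> digit_pairs b L -> c < n ->
  carry_walk n b (n - 1 - c) (map compl_pair L) (n - 1 - c').
Proof.
elim: L c => [|[x y] L IH] c /=; first by move=> ->.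
case=> c1 e w /andP[/andP[hx hy] hL] hc; have hc1 := carry_lt hy hc e.
by exists (n - 1 - c1); [exact: carry_step_compl | exact: IH].
Qed.

Lemma carry_walk_edge c L c' x y : carry_walk n b c L c' -> (x, y) \in L ->
  exists A B c1 c2, [/\ L = A ++ (x, y) :: B, carry_walk n b c A c1,
    n * y + c1 = b * c2 + x & carry_walk n b c2 B c'].
Proof.
move=> w hxy; case/splitPr: hxy w => A B /carry_walk_cat [c1 [wA [c2 e wB]]].
by exists A, B, c1, c2.
Qed.

Lemma carry_walk_split c L c' x y s1 s2 s : n < b ->
  carry_walk n b c L c' -> digit_pairs b L -> c < n -> (x, y) \in L ->
  n * y + s1 = b * s2 + x -> s1 < n -> s \in [:: s1; s2] ->
  exists A B, [/\ L = A ++ B, carry_walk n b c A s & carry_walk n b s B c'].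
Proof.
move=> nb w hd hc hxy e hs1 hs.
have [A [B [c1 [c2 [eL wA e1 wB]]]]] := carry_walk_edge w hxy.
have hc1 : c1 < n.
  by apply: carry_walk_lt wA _ hc; move: hd; rewrite eL digit_pairs_cat => /andP[].
have [? ?] := carry_step_uniq (ltn_trans hc1 nb) (ltn_trans hs1 nb) e1 e; subst s1 s2.
rewrite !inE in hs; case/orP: hs => /eqP ->.
- by exists A, ((x, y) :: B); split => //; exists c2.
- exists (rcons A (x, y)), B; rewrite cat_rcons -cats1; split => //.
  by apply/carry_walk_cat; exists c1; split => //; exists c2.
Qed.

End CarryWalk.

Definition edges (p : pdata) : seq (nat * nat) :=
  [seq (pd p j, pd p (psig p j)) | j <- enum 'I_(pk p).+1].

Lemma Gp_edges p x y : Gp p x y = ((x, y) \in edges p).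
Proof.
apply/existsP/mapP => [[j /andP[/eqP <- /eqP <-]]|[j _ [-> ->]]].
  by exists j; rewrite ?mem_enum.
by exists j; rewrite !eqxx.
Qed.

Lemma sum_seq_val b m (F : 'I_m -> nat) :
  \sum_(j < m) F j * b ^ j = seq_val b [seq F j | j <- enum 'I_m].
Proof.
elim: m F => [|m IH] F; first by rewrite big_ord0 enum_ord0.
rewrite big_ord_recl enum_ordSl /= -map_comp -IH expn0 muln1 big_distrr /=.
by congr (_ + _); apply: eq_bigr => j _; rewrite expnS mulnCA.
Qed.

Definition permutiple_seq (n b : nat) (L : seq (nat * nat)) : Prop :=
  [/\ L != [::], digit_pairs b L, perm_eq (unzip1 L) (unzip2 L) & carry_walk n b 0 L 0].

Lemma permutiple_seq_edges n b p : 0 < b -> is_permutiple n b p ->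
  permutiple_seq n b (edges p).
Proof.
move=> b0 [hd hv].
have e1 : unzip1 (edges p) = [seq pd p j | j <- enum 'I_(pk p).+1]
  by rewrite /unzip1 -map_comp.
have e2 : unzip2 (edges p) = [seq pd p (psig p j) | j <- enum 'I_(pk p).+1]
  by rewrite /unzip2 -map_comp.
have hdp : digit_pairs b (edges p) by apply/allP => e /mapP [j _ ->] /=; rewrite !hd.
split => //.
- by rewrite -size_eq0 size_map size_enum_ord.
- rewrite e1 e2 (map_comp (pd p) (psig p)) perm_map // perm_sym.
  apply: uniq_perm; rewrite ?enum_uniq ?(map_inj_uniq perm_inj) ?enum_uniq // => i.
  by rewrite mem_enum -{1}(permKV (psig p) i) mem_map ?mem_enum //; exact: perm_inj.
- apply/carry_walkP => //.
  by rewrite /digval e1 e2 !sum_seq_val muln0 addn0 in hv *.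
Qed.

Lemma permutiple_of_seq n b L : 0 < b -> permutiple_seq n b L ->
  exists q, is_permutiple n b q /\ Gp q =2 (fun x y => (x, y) \in L).
Proof.
move=> b0 [hne hd hpe w].
set k := (size L).-1.
have hs : size (unzip1 L) == k.+1 by rewrite size_map /k prednK // lt0n size_eq0.
have /tuple_permP [s hs2] : perm_eq (unzip2 L) (Tuple hs) by rewrite perm_sym.
have hk j : j < k.+1 -> j < size L by rewrite -(eqP hs) size_map.
have hfst (j : 'I_k.+1) : tnth (Tuple hs) j = (nth (0, 0) L j).1.
  by rewrite (tnth_nth 0) /= (nth_map (0, 0)) ?hk.
have hsnd (j : 'I_k.+1) : tnth (Tuple hs) (s j) = (nth (0, 0) L j).2.
  have := congr1 (nth 0 ^~ j) hs2.
  by rewrite /= (nth_map (0, 0)) ?hk // (nth_map ord0) ?size_enum_ord // nth_ord_enum.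
have eL1 : [seq tnth (Tuple hs) j | j <- enum 'I_k.+1] = unzip1 L by rewrite map_tnth_enum.
exists (@PData k (fun j => tnth (Tuple hs) j) s); split; first split.
- move=> j /=; rewrite hfst.
  by have /allP /(_ _ (mem_nth (0, 0) (hk j (ltn_ord j)))) /andP[] := hd.
- have := (carry_walkP n 0 0 b0 hd).1 w.
  by rewrite /digval !sum_seq_val /= eL1 -hs2 muln0 addn0.
- move=> x y; rewrite /Gp /=; apply/existsP/idP => [[j /andP[/eqP <- /eqP <-]]|].
    by rewrite hfst hsnd -surjective_pairing mem_nth ?hk.
  case/(nthP (0, 0)) => j hj hnj; have hj' : j < k.+1 by rewrite -(eqP hs) size_map.
  by exists (Ordinal hj'); rewrite hfst hsnd /= hnj !eqxx.
Qed.

Lemma mem_map_compl_pair b L x y : digit_pairs b L ->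
  ((x, y) \in map (compl_pair b) L) = [&& x < b, y < b & (b - 1 - x, b - 1 - y) \in L].
Proof.
move=> hd; apply/mapP/and3P => [[[u v] huv [-> ->]]|[hx hy hin]].
  have /allP /(_ _ huv) /andP[/= hu hv] := hd.
  by rewrite !complK // huv; split => //; lia.
by exists (b - 1 - x, b - 1 - y) => //; rewrite /compl_pair /= !complK.
Qed.

Lemma permutiple_seq_closure n b L A B : 0 < n -> n < b -> permutiple_seq n b L ->
  L = A ++ B -> carry_walk n b 0 A (n - 1) -> carry_walk n b (n - 1) B 0 ->
  permutiple_seq n b (L ++ map (compl_pair b) (B ++ A)).
Proof.
move=> n0 nb [hne hd hpe w] eL wA wB.
have [hdA hdB] : digit_pairs b A /\ digit_pairs b B.
  by apply/andP; rewrite -digit_pairs_cat -eL.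
have e1 : unzip1 (L ++ map (compl_pair b) (B ++ A)) =
          unzip1 L ++ map (fun x => b - 1 - x) (unzip1 (B ++ A))
  by rewrite /unzip1 map_cat -!map_comp.
have e2 : unzip2 (L ++ map (compl_pair b) (B ++ A)) =
          unzip2 L ++ map (fun x => b - 1 - x) (unzip2 (B ++ A))
  by rewrite /unzip2 map_cat -!map_comp.
split.
- by rewrite -size_eq0 size_cat addn_eq0 size_eq0 negb_and hne.
- rewrite /digit_pairs all_cat; apply/andP; split => //.
  by apply/allP => _ /mapP [e _ ->] /=; apply/andP; lia.
- have hpBA : perm_eq (B ++ A) L by rewrite eL perm_catC.
  rewrite e1 e2; apply: perm_cat; first exact: hpe.
  apply: perm_map; rewrite /unzip1 /unzip2.
  by rewrite (permPl (perm_map fst hpBA)) (permPr (perm_map snd hpBA)).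
- have wB' : carry_walk n b 0 (map (compl_pair b) B) (n - 1).
    by have := carry_walk_compl wB hdB; rewrite subnn subn0; apply; lia.
  have wA' : carry_walk n b (n - 1) (map (compl_pair b) A) 0.
    by have := carry_walk_compl wA hdA n0; rewrite subnn subn0.
  apply/carry_walk_cat; exists 0; split => //.
  by rewrite map_cat; apply/carry_walk_cat; exists (n - 1).
Qed.

Lemma Gp_lt n b p : is_permutiple n b p -> forall x y, Gp p x y -> x < b /\ y < b.
Proof. by case=> hd _ x y /existsP [j /andP[/eqP <- /eqP <-]]; rewrite !hd. Qed.

Lemma Gp_carries n b p x y : 0 < n -> n < b -> is_permutiple n b p -> Gp p x y ->
  exists c c', [/\ c < n, c' < n & n * y + c = b * c' + x].
Proof.
move=> n0 nb hp hxy; have [_ hy] := Gp_lt hp hxy.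
have [_ hd _ w] := permutiple_seq_edges (ltn_trans n0 nb) hp.
have hxy' : (x, y) \in edges p by rewrite -Gp_edges.
have [A [B [c [c' [eL wA e _]]]]] := carry_walk_edge w hxy'.
have hc : c < n.
  by apply: carry_walk_lt wA _ n0; move: hd; rewrite eL digit_pairs_cat => /andP[].
by exists c, c'; split => //; apply: carry_lt e.
Qed.

Lemma Gp_sub_mother n b p : 0 < n -> n < b -> is_permutiple n b p ->
  subrel (Gp p) (mother n b).
Proof.
move=> n0 nb hp x y hxy; have [hx hy] := Gp_lt hp hxy.
have [c [c' [hc _ e]]] := Gp_carries n0 nb hp hxy.
by apply/motherP => //; split => //; exists c, c'.
Qed.

Lemma Gp_on_cycle p x y : Gp p x y -> exists c, [/\ uniq c, cycle (Gp p) c & cedge c x y].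
Proof.
move=> hxy; have /existsP [j /andP[/eqP hx /eqP hy]] := hxy.
have : fconnect (psig p) (psig p j) j.
  by rewrite (fconnect_sym (@perm_inj _ (psig p))) fconnect1.
case/connectP => js hjs hlast.
have hP : path (Gp p) y (map (pd p) js).
  rewrite -hy path_map; apply: sub_path hjs => i _ /eqP <-.
  by apply/existsP; exists i; rewrite !eqxx.
have hl : last y (map (pd p) js) = x by rewrite -hy last_map -hlast hx.
case: (shortenP hP) hl => c hc hu _ hl.
exists (y :: c); split => //; first by rewrite /= rcons_path hc hl.

by rewrite /cedge -hl mem_last next_nth mem_last index_last // /= nth_default.
Qed.

Lemma Gamma_edge n b G c1 c2 d1 d2 : Gamma n b G c1 c2 d1 d2 -> G d1 d2.
Proof. by case=> _ _ [c [_ hc /andP[hin /eqP ->] _]]; apply: next_cycle hc hin. Qed.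

Lemma sub_Gamma n b (G H : rel nat) c1 c2 d1 d2 : subrel G H ->
  Gamma n b G c1 c2 d1 d2 -> Gamma n b H c1 c2 d1 d2.
Proof.
by move=> sGH [h1 h2 [c [hd hc hce e]]]; split => //; exists c; split => //; apply: sub_cycle hc.
Qed.

Lemma Gamma_of_Gp n b p x y : 0 < n -> n < b -> is_permutiple n b p -> Gp p x y ->
  exists c1 c2, Gamma n b (Gp p) c1 c2 x y.
Proof.
move=> n0 nb hp hxy; have [c1 [c2 [h1 h2 e]]] := Gp_carries n0 nb hp hxy.
have [c [hu hc hce]] := Gp_on_cycle hxy.
exists c1, c2; split => //; exists c; split => //; apply/and3P; split => //.
- by case: (c) hce.
- by apply: sub_cycle hc; apply: Gp_sub_mother.
Qed.

(* An injective extension of d |-> b-1-d from digits to nat, so that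
   [next_map] applies to complemented cycles. *)
Definition compl_ext (b x : nat) : nat := if x < b then b - 1 - x else x.

Lemma compl_ext_inj b : injective (compl_ext b).
Proof. by move=> x y; rewrite /compl_ext; case: ifP; case: ifP; lia. Qed.

Lemma Gamma_compl n b G c1 c2 d1 d2 : 0 < n -> n < b -> G =2 reflG b G ->
  Gamma n b G c1 c2 d1 d2 -> Gamma_refl n b G c1 c2 d1 d2.
Proof.
move=> n0 nb sG [hc1 hc2 [c [/and3P[hne hu hm] hcG /andP[hin /eqP hnx] e]]].
have c_lt x : x \in c -> x < b by move=> hx; have /and3P[] := next_cycle hm hx.
have hd1 : d1 < b by apply: c_lt.
have hd2 : d2 < b by apply: c_lt; rewrite hnx mem_next.
have compl_cycle (R : rel nat) : {in c &, forall x y, R x y -> R (b - 1 - x) (b - 1 - y)} ->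
    cycle R c -> cycle R (map (compl_ext b) c).
  move=> hR hRc; rewrite cycle_map; apply: (sub_in_cycle (P := mem c)) hRc; last first.
    by apply/allP.
  by move=> x y hx hy /=; rewrite /compl_ext !c_lt //; apply: hR.
split; try lia; split; try lia.
exists (map (compl_ext b) c); split.
- apply/and3P; split; first by case: (c) hne.
    by rewrite (map_inj_uniq (@compl_ext_inj b)).
  by apply: compl_cycle hm => x y _ _; apply: mother_compl.
- by apply: compl_cycle hcG => x y hx hy; rewrite sG => /and3P[].
- have compl_d (d : nat) : d < b -> b - 1 - d = compl_ext b d by rewrite /compl_ext => ->.
  rewrite /cedge !compl_d // (mem_map (@compl_ext_inj b)) hin.
  by rewrite (next_map (@compl_ext_inj b)) // hnx eqxx.
- exact: (carry_step_compl hd1 hd2 hc1 hc2 e).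
Qed.

Section Reflection.
Variable b : nat.
Implicit Types G H : rel nat.

Lemma reflG_mono G H : subrel G H -> subrel (reflG b G) (reflG b H).
Proof. by move=> sGH x y /and3P[hx hy /sGH hG]; apply/and3P. Qed.

Lemma reflG_unionG G H : reflG b (unionG G H) =2 unionG (reflG b G) (reflG b H).
Proof. by move=> x y; rewrite /reflG /unionG; case: (x < b); case: (y < b). Qed.

Lemma reflGK G : (forall x y, G x y -> x < b /\ y < b) -> reflG b (reflG b G) =2 G.
Proof.
move=> hG x y; rewrite /reflG; apply/and3P/idP => [[hx hy /and3P[_ _]]|hxy].
  by rewrite !complK.
by have [hx hy] := hG _ _ hxy; rewrite !complK //; split => //; apply/and3P; split => //; lia.
Qed.

Lemma reflG_eq_of_sub G : (forall x y, G x y -> x < b /\ y < b) ->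
  subrel (reflG b G) G -> G =2 reflG b G.
Proof.
move=> hG sRG x y; apply/idP/idP => [hxy|]; last exact: sRG.
by apply: (reflG_mono sRG); rewrite reflGK.
Qed.

Lemma reflG_eq_of_sup G : (forall x y, G x y -> x < b /\ y < b) ->
  subrel G (reflG b G) -> G =2 reflG b G.
Proof.
move=> hG sGR; apply: reflG_eq_of_sub => // x y /(reflG_mono sGR).
by rewrite reflGK.
Qed.

End Reflection.

Lemma eq_Cl n b (G H : rel nat) : G =2 H -> same_class (Cl n b G) (Cl n b H).
Proof. by move=> eGH q; split; case=> hq sq; split => // x y /sq; rewrite eGH. Qed.

Lemma symmetric_class_closure n b (G : rel nat) : (forall x y, G x y -> x < b /\ y < b) ->
  Gamma_vertex n b G (n - 1) -> symmetric_class n b (unionG G (reflG b G)).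
Proof.
move=> hG [t [d1 [d2 hv]]]; split.
  exists t, d1, d2; case: hv => hv; [left|right];
    by apply: sub_Gamma hv => x y hxy; apply/orP; left.
by apply: eq_Cl => x y; rewrite reflG_unionG /unionG reflGK // orbC.
Qed.

Lemma same_class_closureP n b (G : rel nat) : (forall x y, G x y -> x < b /\ y < b) ->
  (exists q, is_permutiple n b q /\ Gp q =2 unionG G (reflG b G)) ->
  same_class (Cl n b G) (Cl n b (unionG G (reflG b G))) <-> G =2 reflG b G.
Proof.
move=> hG [q [hq hGq]]; split => [hs|hsym].
  apply: reflG_eq_of_sub => // x y hxy.
  have [_ sqG] : Cl n b G q by apply/hs; split => // u v; rewrite hGq.
  by apply: sqG; rewrite hGq /unionG hxy orbT.
by apply: eq_Cl => x y; rewrite /unionG -hsym orbb.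
Qed.

Lemma symmetric_classP n b p : is_permutiple n b p -> Gamma_vertex n b (Gp p) (n - 1) ->
  symmetric_class n b (Gp p) <-> Gp p =2 reflG b (Gp p).
Proof.
move=> hp hv; split => [[_ hs]|hsym]; last by split => //; apply: eq_Cl.
by apply: reflG_eq_of_sup (Gp_lt hp) _; have [] := (hs p).1 (conj hp (fun x y => id)).
Qed.

Lemma Gamma_symmetricP n b p : 0 < n -> n < b -> is_permutiple n b p ->
  (forall c1 c2 d1 d2, Gamma n b (Gp p) c1 c2 d1 d2 <-> Gamma_refl n b (Gp p) c1 c2 d1 d2) <->
  Gp p =2 reflG b (Gp p).
Proof.
move=> n0 nb hp; split => [hsym|hG c1 c2 d1 d2].
  apply: reflG_eq_of_sub (Gp_lt hp) _ => x y /and3P[hx hy hxy].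
  have [c1 [c2 hg]] := Gamma_of_Gp n0 nb hp hxy; have [hc1 hc2 _] := hg.
  apply: (@Gamma_edge n b _ (n - 1 - c1) (n - 1 - c2)); apply/hsym.
  by split; rewrite ?complK //; lia.
split; first exact: Gamma_compl.
by case=> hc1 hc2 hd1 hd2 /(Gamma_compl n0 nb hG) [_ _ _ _]; rewrite !complK.
Qed.

Lemma closure_permutiple n b p : 0 < n -> n < b -> is_permutiple n b p ->
  Gamma_vertex n b (Gp p) (n - 1) ->
  exists q, is_permutiple n b q /\ Gp q =2 unionG (Gp p) (reflG b (Gp p)).
Proof.
move=> n0 nb hp [t [d1 [d2 hv]]]; have b0 : 0 < b by apply: ltn_trans nb.
have hL := permutiple_seq_edges b0 hp; have [_ hd _ w] := hL.
have [s1 [s2 [hs1 hs e hd12]]] : exists s1 s2,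
    [/\ s1 < n, n - 1 \in [:: s1; s2], n * d2 + s1 = b * s2 + d1 & Gp p d1 d2].
  case: hv => hg; have := Gamma_edge hg; case: hg => h1 h2 [_ [_ _ _ e]].
    by exists (n - 1), t; rewrite !inE eqxx.
  by exists t, (n - 1); rewrite !inE eqxx orbT.
have hd12' : (d1, d2) \in edges p by rewrite -Gp_edges.
have [A [B [eL wA wB]]] := carry_walk_split nb w hd n0 hd12' e hs1 hs.
have hdBA : digit_pairs b (B ++ A) by rewrite digit_pairs_cat andbC -digit_pairs_cat -eL.
have [q [hq hGq]] := permutiple_of_seq b0 (permutiple_seq_closure n0 nb hL eL wA wB).
exists q; split => // x y; rewrite hGq mem_cat mem_map_compl_pair // /unionG /reflG !Gp_edges.
by rewrite eL !mem_cat [(_ \in B) || (_ \in A)]orbC.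
Qed.

Theorem theorem18 (n b : nat) (p : pdata) :
  1 < n -> n < b ->
  is_permutiple n b p ->
  Gamma_vertex n b (Gp p) (n - 1) ->
  (* the symmetric closure is a permutiple class (it has a permutiple with
     graph G_C u refl(G_C)) and it is a symmetric class *)
  ((exists q : pdata, is_permutiple n b q /\
      Gp q =2 unionG (Gp p) (reflG b (Gp p))) /\
   symmetric_class n b (unionG (Gp p) (reflG b (Gp p)))) /\
  (* TFAE (1)-(4) *)
  ((symmetric_class n b (Gp p) <->
      same_class (Cl n b (Gp p)) (Cl n b (unionG (Gp p) (reflG b (Gp p))))) /\
   (same_class (Cl n b (Gp p)) (Cl n b (unionG (Gp p) (reflG b (Gp p)))) <->
      (forall c1 c2 d1 d2,
         Gamma n b (Gp p) c1 c2 d1 d2 <-> Gamma_refl n b (Gp p) c1 c2 d1 d2)) /\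
   ((forall c1 c2 d1 d2,
         Gamma n b (Gp p) c1 c2 d1 d2 <-> Gamma_refl n b (Gp p) c1 c2 d1 d2) <->
      Gp p =2 reflG b (Gp p))).
Proof.
move=> n1 nb hp hv; have n0 : 0 < n by apply: ltnW.
have hq := closure_permutiple n0 nb hp hv.
have h14 := symmetric_classP hp hv.
have h24 := same_class_closureP (Gp_lt hp) hq.
have h34 := Gamma_symmetricP n0 nb hp.
split; first by split; last exact: symmetric_class_closure (Gp_lt hp) hv.
split; first exact: iff_trans h14 (iff_sym h24).
by split; first exact: iff_trans h24 (iff_sym h34).
Qed.
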